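(* Let $X,Y$ be real normed linear spaces, $Z=X\oplus_\infty Y$ and $z=(x,y)\in Z\setminus\{\theta\}$. Then: (i) If $\|x\|>\|y\|$ and $x$ is $\varepsilon_x$-smooth for some $\varepsilon_x\in[0,2)$, then $z$ is $\varepsilon_x$-smooth. (ii) If $\|x\|<\|y\|$ and $y$ is $\varepsilon_y$-smooth for some $\varepsilon_y\in[0,2)$, then $z$ is $\varepsilon_y$-smooth. (iii) If $\|x\|=\|y\|$, then $z$ is not $\varepsilon$-smooth for any $\varepsilon\in[0,2)$.
   Context: $X\oplus_\infty Y$ is $X\times Y$ with norm $\max\{\|x\|,\|y\|\}$. For a normed space $W$ and $w\neq\theta$, $J(w)=\{\phi\in S_{W^*}:\phi(w)=\|w\|\}$, and $w$ is $\delta$-smooth if $\sup_{\phi,\psi\in J(w)}\|\phi-\psi\|\le\delta$; ''approximately smooth'' means $\delta$-smooth for some $\delta\in[0,2)$. *)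

From HB Require Import structures.
From mathcomp Require Import all_boot all_order all_algebra.
From mathcomp Require Import all_classical all_reals all_analysis.
Set Implicit Arguments. Unset Strict Implicit. Unset Printing Implicit Defensive.
Import Order.TTheory GRing.Theory Num.Theory.
Import numFieldNormedType.Exports.
Local Open Scope classical_set_scope.
Local Open Scope ring_scope.

Section Smooth.
Variables (R : realType) (V : lmodType R) (nrm : V -> R).

Definition is_dual (f : V -> R) : Prop :=
  (forall (a : R) (u v : V), f (a *: u + v) = a * f u + f v) /\
  exists M : R, forall u, `|f u| <= M * nrm u.

Definition dnorm (f : V -> R) : R :=
  sup [set `|f u| | u in [set u | nrm u <= 1]].

Definition Jset (w : V) : set (V -> R) :=
  [set f | is_dual f /\ dnorm f = 1 /\ f w = nrm w].

Definition delta_smooth (w : V) (delta : R) : Prop :=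
  w != 0 /\ forall f g, Jset w f -> Jset w g -> dnorm (f \- g) <= delta.
End Smooth.

Definition nnorm (R : realType) (X : normedModType R) (x : X) : R := `|x|.
Definition inf_norm (R : realType) (X Y : normedModType R) (z : X * Y) : R :=
  Num.max `|z.1| `|z.2|.

(* If |y| < |x|, perturbing the second coordinate of (x, y) slightly does not
   change the sup-norm, so every f in J(x, y) vanishes on {0} x Y.  Such an f
   factors through the first projection, its restriction to X lies in J(x),
   and the distance between two elements of J(x, y) is bounded by that of
   their restrictions; symmetrically if |x| < |y|.  If |x| = |y|, the
   Hahn-Banach theorem, obtained from Zorn's lemma applied to graphs of
   norm-dominated partial functionals, gives norming functionals phi of x and
   psi of y; both phi o fst and psi o snd lie in J(x, y), and they differ by 2
   at (x/|x|, -y/|y|). *)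

From mathcomp Require Import all_boot all_order all_algebra.
From mathcomp Require Import all_classical all_reals all_analysis.
From mathcomp Require Import ring lra.
Set Implicit Arguments. Unset Strict Implicit. Unset Printing Implicit Defensive.
Import Order.TTheory GRing.Theory Num.Theory.
Import numFieldNormedType.Exports.
Local Open Scope classical_set_scope.
Local Open Scope ring_scope.

Definition linear_form (R : pzRingType) (V : lmodType R) (f : V -> R) : Prop :=
  forall (a : R) (u v : V), f (a *: u + v) = a * f u + f v.

Section LinearForm.
Variables (R : pzRingType) (V : lmodType R) (f : V -> R).
Hypothesis lin_f : linear_form f.

Lemma linear_form0 : f 0 = 0.
Proof.
have := lin_f 1 0 0; rewrite scale1r addr0 mul1r => /eqP.
by rewrite -subr_eq subrr eq_sym => /eqP.
Qed.

Lemma linear_formZ (a : R) (u : V) : f (a *: u) = a * f u.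
Proof. by have := lin_f a u 0; rewrite !addr0 linear_form0 addr0. Qed.

Lemma linear_formD (u v : V) : f (u + v) = f u + f v.
Proof. by have := lin_f 1 u v; rewrite scale1r mul1r. Qed.

Lemma linear_formN (u : V) : f (- u) = - f u.
Proof. by rewrite -scaleN1r linear_formZ mulN1r. Qed.

End LinearForm.

Section DualNorm.
Variables (R : realType) (V : normedModType R).

Lemma dnorm_le (f : V -> R) (c : R) :
  (forall u : V, `|u| <= 1 -> `|f u| <= c) -> dnorm Num.norm f <= c.
Proof.
move=> fc; apply: ge_sup; first by exists `|f 0|, 0; rewrite //= normr0.
by move=> _ [u u1 <-]; exact: fc.
Qed.

Lemma le_dnorm (f : V -> R) (u : V) :
  is_dual Num.norm f -> `|u| <= 1 -> `|f u| <= dnorm Num.norm f.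
Proof.
move=> [_ [M fM]] u1; apply: ub_le_sup; last by exists u.
exists `|M| => _ [w w1 <-]; apply: le_trans (fM w) _.
by apply: le_trans (ler_norm _) _; rewrite normrM normr_id ler_piMr.
Qed.

Lemma is_dual_sub (f g : V -> R) :
  is_dual Num.norm f -> is_dual Num.norm g -> is_dual Num.norm (f \- g).
Proof.
move=> [lf [Mf fM]] [lg [Mg gM]]; split=> [a u v|] /=.
  by rewrite lf lg; ring.
exists (Mf + Mg) => u; apply: le_trans (ler_normB _ _) _.
by rewrite mulrDl lerD.
Qed.

Lemma Jset_norm_le (w : V) (f : V -> R) :
  Jset Num.norm w f -> forall u, `|f u| <= `|u|.
Proof.
move=> [fd [f1 _]] u; have [->|u0] := eqVneq u 0.
  by rewrite (linear_form0 fd.1) !normr0.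
have u1 : `| `|u|^-1 *: u| <= 1 by rewrite normfZV.
have := le_dnorm fd u1.
rewrite f1 (linear_formZ fd.1) normrM ger0_norm ?invr_ge0 //.
by rewrite ler_pdivrMl ?normr_gt0 // mulr1.
Qed.

Lemma Jset_norming (w : V) (f : V -> R) : w != 0 -> linear_form f ->
  (forall u, `|f u| <= `|u|) -> f w = `|w| -> Jset Num.norm w f.
Proof.
move=> w0 lf fle fw.
have fd : is_dual Num.norm f by split=> //; exists 1 => u; rewrite mul1r.
split=> //; split=> //; apply/le_anti/andP; split.
  by apply: dnorm_le => u /(le_trans (fle u)).
have w1 : `| `|w|^-1 *: w| <= 1 by rewrite normfZV.
have := le_dnorm fd w1.
by rewrite (linear_formZ lf) fw mulVf ?normr_eq0 // normr1.
Qed.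

Lemma Jset_flat_eq0 (w v : V) (f : V -> R) (d : R) :
  Jset Num.norm w f -> 0 < d ->
  (forall t, `|t| <= d -> `|w + t *: v| <= `|w|) -> f v = 0.
Proof.
move=> Jf d0 flat; have [[lf _] [_ fw]] := Jf.
have tfv t : `|t| <= d -> t * f v <= 0.
  move=> td; have := le_trans (Jset_norm_le Jf _) (flat t td).
  by move/(le_trans (ler_norm _)); rewrite addrC lf fw; lra.
have := tfv d; have := tfv (- d); rewrite normrN gtr0_norm // lexx; nra.
Qed.

End DualNorm.

Section Transfer.
Variables (R : realType) (U V : normedModType R) (T : U -> V) (P : V -> U).
Hypotheses (T_linear : linear T) (T_isometry : forall u, `|T u| = `|u|).
Hypothesis P_contraction : forall v, `|P v| <= `|v|.

Lemma delta_smooth_transfer (u : U) (w : V) (e : R) :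
  P w = u -> `|w| = `|u| ->
  (forall f, Jset Num.norm w f -> forall v, f v = f (T (P v))) ->
  delta_smooth Num.norm u e -> delta_smooth Num.norm w e.
Proof.
move=> Pw wu factor [u0 smooth_u]; split=> [|f g Jf Jg].
  by rewrite -normr_eq0 wu normr_eq0.
have JT h : Jset Num.norm w h -> Jset Num.norm u (h \o T).
  move=> Jh; have [[lh _] [_ hw]] := Jh.
  apply: Jset_norming => // [a u1 u2|u1|]; rewrite /comp.
  - by rewrite T_linear lh.
  - by rewrite -T_isometry (Jset_norm_le Jh).
  - by rewrite -[in LHS]Pw -factor // hw wu.
have [JfT JgT] := (JT f Jf, JT g Jg).
apply: dnorm_le => v v1; rewrite /= (factor f Jf) (factor g Jg).
apply: le_trans (smooth_u _ _ JfT JgT).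
exact: le_dnorm (is_dual_sub JfT.1 JgT.1) (le_trans (P_contraction v) v1).
Qed.

End Transfer.

Section HahnBanach.
Variables (R : realType) (X : normedModType R) (x0 : X).

(* The last clause admits the empty graph, so that Zorn's lemma also covers the
   empty chain, and forces every other graph to contain (x0, |x0|). *)
Definition dominated_graph (G : set (X * R)) : Prop :=
  [/\ forall u r s, G (u, r) -> G (u, s) -> r = s,
      forall (a : R) u v r s, G (u, r) -> G (v, s) -> G (a *: u + v, a * r + s),
      forall u r, G (u, r) -> r <= `|u| &
      forall p, G p -> G (x0, `|x0|)].

Lemma dominated_graph_bigcup (F : set (set (X * R))) :
  F `<=` dominated_graph -> total_on F subset ->
  dominated_graph (\bigcup_(G in F) G).
Proof.
move=> FD tot; split.
- move=> u r s [G1 F1 G1ur] [G2 F2 G2us].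
  have [G12|G21] := tot _ _ F1 F2.
    by have [+ _ _ _] := FD _ F2; apply; [exact: G12 G1ur|].
  by have [+ _ _ _] := FD _ F1; apply; [|exact: G21 G2us].
- move=> a u v r s [G1 F1 G1ur] [G2 F2 G2vs].
  have [G12|G21] := tot _ _ F1 F2.
    by exists G2 => //; have [_ + _ _] := FD _ F2; apply; [exact: G12 G1ur|].
  by exists G1 => //; have [_ + _ _] := FD _ F1; apply; [|exact: G21 G2vs].
- by move=> u r [G1 F1]; have [_ _ + _] := FD _ F1; apply.
- move=> p [G1 F1 G1p]; exists G1 => //.
  by have [_ _ _ sat_G1] := FD _ F1; exact: sat_G1 G1p.
Qed.

Lemma dominated_graph_line :
  dominated_graph (range (fun t : R => (t *: x0, t * `|x0|))).
Proof.
split.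
- move=> u r s [t _ [<- <-]] [t' _ [e <-]]; apply/eqP; rewrite -subr_eq0 -mulrBl.
  have /eqP : `|(t - t') *: x0| = 0 by rewrite scalerBl e subrr normr0.
  by rewrite normrZ !mulf_eq0 normr_eq0.
- move=> a u v r s [t _ [<- <-]] [t' _ [<- <-]]; exists (a * t + t') => //.
  by rewrite scalerDl scalerA mulrDl mulrA.
- by move=> u r [t _ [<- <-]]; rewrite normrZ ler_wpM2r // ler_norm.
- by move=> _ _; exists 1; rewrite // scale1r mul1r.
Qed.

Section Extension.
Variable G : set (X * R).
Hypotheses (DG : dominated_graph G) (Gx0 : G (x0, `|x0|)).

Lemma dominated_graph0 : G (0, 0).
Proof.
have [_ lin_G _ _] := DG.
by have := lin_G (-1) _ _ _ _ Gx0 Gx0; rewrite scaleN1r addNr mulN1r addNr.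
Qed.

Lemma dominated_graphZ (a : R) u r : G (u, r) -> G (a *: u, a * r).
Proof.
have [_ lin_G _ _] := DG.
by move=> Gur; have := lin_G a _ _ _ _ Gur dominated_graph0; rewrite !addr0.
Qed.

Lemma graph_extension_bounds (v : X) : exists c : R,
  (forall u r, G (u, r) -> r - `|u - v| <= c) /\
  (forall w s, G (w, s) -> c <= `|w + v| - s).
Proof.
have [_ lin_G dom_G _] := DG.
have between u r w s : G (u, r) -> G (w, s) -> r - `|u - v| <= `|w + v| - s.
  move=> Gur Gws; have := dom_G _ _ (lin_G 1 _ _ _ _ Gur Gws).
  have -> : 1 *: u + w = (w + v) + (u - v).
    by rewrite addrACA subrr addr0 addrC scale1r.
  by have := ler_normD (w + v) (u - v); rewrite mul1r; lra.
pose S := [set z | exists u r, G (u, r) /\ z = r - `|u - v|].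
have S_ub w s : G (w, s) -> ubound S (`|w + v| - s).
  by move=> Gws _ [u [r [Gur ->]]]; exact: between.
exists (sup S); split=> [u r Gur|w s Gws].
  apply: ub_le_sup; last by exists u, r.
  by exists (`|0 + v| - 0); exact: S_ub dominated_graph0.
apply: ge_sup; last exact: S_ub.
by exists (0 - `|0 - v|), 0, 0; split=> //; exact: dominated_graph0.
Qed.

Lemma graph_extension_le (v : X) (c : R) :
  (forall u r, G (u, r) -> r - `|u - v| <= c) ->
  (forall w s, G (w, s) -> c <= `|w + v| - s) ->
  forall u r t, G (u, r) -> r + t * c <= `|u + t *: v|.
Proof.
move=> lo hi u r t Gur; have [_ _ dom_G _] := DG.
have normZV s w : 0 < s -> `|s^-1 *: w| = s^-1 * `|w|.
  by move=> s0; rewrite normrZ gtr0_norm ?invr_gt0.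
have [t0|t0|->] := ltgtP t 0; last by rewrite mul0r scale0r !addr0; exact: dom_G.
- have nt0 : 0 < - t by rewrite oppr_gt0.
  have := lo _ _ (dominated_graphZ (- t)^-1 Gur).
  have -> : (- t)^-1 *: u - v = (- t)^-1 *: (u + t *: v).
    by rewrite scalerDr scalerA invrN mulNr mulVf ?ltr0_neq0 // scaleN1r.
  rewrite normZV // -mulrBr -(ler_pM2l nt0) mulrA mulfV ?gt_eqF // mul1r; lra.
- have := hi _ _ (dominated_graphZ t^-1 Gur).
  have -> : t^-1 *: u + v = t^-1 *: (u + t *: v).
    by rewrite scalerDr scalerA mulVf ?gt_eqF // scale1r.
  rewrite normZV // -mulrBr -(ler_pM2l t0) mulrA mulfV ?gt_eqF // mul1r; lra.
Qed.

Lemma dominated_graph_extend (v : X) : (forall r, ~ G (v, r)) ->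
  exists2 B, dominated_graph B & G `<` B.
Proof.
move=> Gv; have [fun_G lin_G dom_G _] := DG.
have [c [lo hi]] := graph_extension_bounds v.
pose B := [set p | exists u r t, G (u, r) /\ p = (u + t *: v, r + t * c)].
have GB : G `<=` B.
  by move=> [u r] Gur; exists u, r, 0; rewrite scale0r mul0r !addr0; split.
exists B; last first.
  split=> // /(_ (v, c)) BG; apply: (Gv c); apply: BG.
  exists 0, 0, 1; rewrite scale1r mul1r !add0r.
  by split=> //; exact: dominated_graph0.
split.
- move=> _ _ _ [u1 [r1 [t1 [Gur1 [-> ->]]]]] [u2 [r2 [t2 [Gur2 [e ->]]]]].
  have [et|t12] := eqVneq t1 t2.
    rewrite -et in e *; move/(congr1 (fun z => z - t1 *: v)): e.
    rewrite !addrK => eu.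
    by rewrite -eu in Gur2; rewrite (fun_G _ _ _ Gur1 Gur2).
  have ev : v = (t1 - t2)^-1 *: ((-1) *: u1 + u2).
    apply: (@scalerI _ _ (t1 - t2)); first by rewrite subr_eq0.
    rewrite scalerA mulfV ?subr_eq0 // scale1r scaleN1r scalerBl.
    have -> : u2 = u1 + t1 *: v - t2 *: v by rewrite e addrK.
    by rewrite -addrA addKr.
  case: (Gv ((t1 - t2)^-1 * ((-1) * r1 + r2))); rewrite {1}ev.
  by apply: dominated_graphZ; apply: lin_G.
- move=> a _ _ _ _ [u1 [r1 [t1 [Gur1 [-> ->]]]]] [u2 [r2 [t2 [Gur2 [-> ->]]]]].
  exists (a *: u1 + u2), (a * r1 + r2), (a * t1 + t2); split; first exact: lin_G.
  congr (_, _); last by ring.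
  by rewrite scalerDr scalerA scalerDl addrACA.
- by move=> _ _ [u [r [t [Gur [-> ->]]]]]; exact: graph_extension_le.
- by move=> p _; exact: GB.
Qed.

End Extension.

Theorem exists_norming_functional : exists f : X -> R,
  [/\ linear_form f, forall u, `|f u| <= `|u| & f x0 = `|x0|].
Proof.
have [A [DA Amax]] := Zorn_bigcup dominated_graph_bigcup.
have [fun_A lin_A dom_A sat_A] := DA.
have Ax0 : A (x0, `|x0|).
  apply: contrapT => nAx0; apply: Amax dominated_graph_line; split.
    by move=> p /sat_A.
  move=> /(_ (x0, `|x0|)) Ax0; apply/nAx0/Ax0.
  by exists 1; rewrite // scale1r mul1r.
have total u : exists r, A (u, r).
  apply: contrapT => Au.
  have [|B DB AB] := dominated_graph_extend DA Ax0 (v := u).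
    by move=> r Aur; apply: Au; exists r.
  exact: Amax AB DB.
have [f Af] := choice total.
have lf : linear_form f.
  by move=> a u v; apply: fun_A (Af _) (lin_A _ _ _ _ _ (Af u) (Af v)).
exists f; split=> // [u|]; last exact: fun_A (Af x0) Ax0.
rewrite ler_norml dom_A ?Af // andbT lerNl -(linear_formN lf) -normrN.
exact: dom_A (Af _).
Qed.

End HahnBanach.

Lemma norm_add_small_le (R : realType) (Z : normedModType R) (b v : Z) (r : R) :
  `|b| < r ->
  exists2 d : R, 0 < d & forall t : R, `|t| <= d -> `|b + t *: v| <= r.
Proof.
move=> br; have v1 : 0 < `|v| + 1 by rewrite ltr_wpDl.
exists ((r - `|b|) / (`|v| + 1)) => [|t td]; first by rewrite divr_gt0 ?subr_gt0.
apply: le_trans (ler_normD _ _) _; rewrite normrZ.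
have : `|t| * `|v| <= (r - `|b|) / (`|v| + 1) * (`|v| + 1).
  by rewrite ler_pM // lerDl.
by rewrite divfK ?gt_eqF //; lra.
Qed.

Section SupNorm.
Variables (R : realType) (X Y : normedModType R).

Lemma normr_pair (u : X) (v : Y) : `|(u, v)| = Num.max `|u| `|v|.
Proof. by []. Qed.

Lemma pairD (u u' : X) (v v' : Y) : (u, v) + (u', v') = (u + u', v + v').
Proof. by []. Qed.

Lemma pairZ (a : R) (u : X) (v : Y) : a *: (u, v) = (a *: u, a *: v).
Proof. by []. Qed.

Lemma linear_form_pair (f : X * Y -> R) : linear_form f ->
  forall u v, f (u, v) = f (u, 0) + f (0, v).
Proof. by move=> lf u v; rewrite -(linear_formD lf) pairD addr0 add0r. Qed.

Lemma Jset_pair_snd0 (x : X) (y : Y) (f : X * Y -> R) : `|y| < `|x| ->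
  Jset Num.norm (x, y) f -> forall v, f (0, v) = 0.
Proof.
move=> yx Jf v; have [d d0 small] := norm_add_small_le v yx.
apply: (Jset_flat_eq0 Jf d0) => t td.
have -> : (x, y) + t *: (0, v) = (x, y + t *: v) :> X * Y.
  by rewrite pairZ pairD scaler0 addr0.
by rewrite !normr_pair (max_l (ltW yx)) ge_max lexx small.
Qed.

Lemma Jset_pair_fst0 (x : X) (y : Y) (f : X * Y -> R) : `|x| < `|y| ->
  Jset Num.norm (x, y) f -> forall u, f (u, 0) = 0.
Proof.
move=> xy Jf u; have [d d0 small] := norm_add_small_le u xy.
apply: (Jset_flat_eq0 Jf d0) => t td.
have -> : (x, y) + t *: (u, 0) = (x + t *: u, y) :> X * Y.
  by rewrite pairZ pairD scaler0 addr0.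
by rewrite !normr_pair (max_r (ltW xy)) ge_max lexx small.
Qed.

Lemma delta_smooth_pair_fst (x : X) (y : Y) (e : R) : `|y| < `|x| ->
  delta_smooth Num.norm x e -> delta_smooth Num.norm (x, y) e.
Proof.
move=> yx; apply: (delta_smooth_transfer (T := fun u => (u, 0)) (P := fst)).
- by move=> a u u'; rewrite pairZ pairD scaler0 addr0.
- by move=> u; rewrite normr_pair normr0 max_l.
- by move=> [u v]; rewrite normr_pair le_max lexx.
- by [].
- by rewrite normr_pair max_l // ltW.
- move=> f Jf [u v]; have [[lf _] _] := Jf.
  by rewrite (linear_form_pair lf) (Jset_pair_snd0 yx Jf) addr0.
Qed.

Lemma delta_smooth_pair_snd (x : X) (y : Y) (e : R) : `|x| < `|y| ->
  delta_smooth Num.norm y e -> delta_smooth Num.norm (x, y) e.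
Proof.
move=> xy; apply: (delta_smooth_transfer (T := fun v => (0, v)) (P := snd)).
- by move=> a v v'; rewrite pairZ pairD scaler0 addr0.
- by move=> v; rewrite normr_pair normr0 max_r.
- by move=> [u v]; rewrite normr_pair le_max lexx orbT.
- by [].
- by rewrite normr_pair max_r // ltW.
- move=> f Jf [u v]; have [[lf _] _] := Jf.
  by rewrite (linear_form_pair lf) (Jset_pair_fst0 xy Jf) add0r.
Qed.

Lemma Jset_pair_fst (x : X) (y : Y) (phi : X -> R) : x != 0 -> `|y| <= `|x| ->
  linear_form phi -> (forall u, `|phi u| <= `|u|) -> phi x = `|x| ->
  Jset Num.norm (x, y) (phi \o fst).
Proof.
move=> x0 yx lphi phi_le phix.
have nxy : `|(x, y)| = `|x| by rewrite normr_pair max_l.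
apply: Jset_norming => [|a [u v] [u' v']|[u v]|] /=.
- by rewrite -normr_eq0 nxy normr_eq0.
- exact: lphi.
- by rewrite normr_pair le_max phi_le.
- by rewrite phix nxy.
Qed.

Lemma Jset_pair_snd (x : X) (y : Y) (psi : Y -> R) : y != 0 -> `|x| <= `|y| ->
  linear_form psi -> (forall v, `|psi v| <= `|v|) -> psi y = `|y| ->
  Jset Num.norm (x, y) (psi \o snd).
Proof.
move=> y0 xy lpsi psi_le psiy.
have nxy : `|(x, y)| = `|y| by rewrite normr_pair max_r.
apply: Jset_norming => [|a [u v] [u' v']|[u v]|] /=.
- by rewrite -normr_eq0 nxy normr_eq0.
- exact: lpsi.
- by rewrite normr_pair le_max psi_le orbT.
- by rewrite psiy nxy.
Qed.

Lemma not_delta_smooth_pair_eq (x : X) (y : Y) (e : R) : `|x| = `|y| -> e < 2 ->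
  ~ delta_smooth Num.norm (x, y) e.
Proof.
move=> xy e2 [xy0 smooth].
have x0 : x != 0.
  apply: contraNneq xy0 => x0; have /eqP : `|y| = 0 by rewrite -xy x0 normr0.
  by rewrite normr_eq0 x0 => /eqP ->.
have y0 : y != 0 by rewrite -normr_eq0 -xy normr_eq0.
have [phi [lphi phi_le phix]] := exists_norming_functional x.
have [psi [lpsi psi_le psiy]] := exists_norming_functional y.
have JF : Jset Num.norm (x, y) (phi \o fst).
  by apply: Jset_pair_fst => //; rewrite xy.
have JG : Jset Num.norm (x, y) (psi \o snd).
  by apply: Jset_pair_snd => //; rewrite xy.
have w1 : `|(`|x|^-1 *: x, - (`|y|^-1 *: y))| <= 1.
  by rewrite normr_pair normrN !normfZV // maxxx.
have := le_trans (le_dnorm (is_dual_sub JF.1 JG.1) w1) (smooth _ _ JF JG).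
rewrite /= (linear_formN lpsi) (linear_formZ lphi) (linear_formZ lpsi).
rewrite phix psiy !mulVf ?normr_eq0 //.
by rewrite opprK ger0_norm //; lra.
Qed.

End SupNorm.

Theorem theorem6p5 (R : realType) (X Y : normedModType R) (x : X) (y : Y)
  (hz : ((x, y) : X * Y) != 0) :
  (`|y| < `|x| -> forall ex : R, 0 <= ex < 2 ->
     delta_smooth (@nnorm R X) x ex ->
     delta_smooth (@inf_norm R X Y) (x, y) ex) /\
  (`|x| < `|y| -> forall ey : R, 0 <= ey < 2 ->
     delta_smooth (@nnorm R Y) y ey ->
     delta_smooth (@inf_norm R X Y) (x, y) ey) /\
  (`|x| = `|y| -> forall e : R, 0 <= e < 2 ->
     ~ delta_smooth (@inf_norm R X Y) (x, y) e).
Proof.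
(* [nnorm] and [inf_norm] are convertible to [Num.norm], the norm of X * Y
   being the max norm. *)
split; [|split].
- by move=> yx e _; exact: delta_smooth_pair_fst.
- by move=> xy e _; exact: delta_smooth_pair_snd.
- by move=> xy e /andP[_ e2]; exact: not_delta_smooth_pair_eq.
Qed.
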